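(* Let $n \ge 4$ be an even integer, let $m = \frac{n-2}{2}$, and let $G_n$ be the $n$-vertex graph obtained from two disjoint cliques $Q_1, Q_2$, each isomorphic to $K_m$, together with two non-adjacent vertices $u$ and $v$, each adjacent to every vertex of $Q_1 \cup Q_2$ (i.e., $G_n$ is the join of $2K_m$ with $2K_1$). Then $AT(G_n) = \frac{n}{2}$.
   Context: For a digraph $D$, an Eulerian subdigraph is a spanning subdigraph $F$ with $d^+_F(v) = d^-_F(v)$ for every vertex $v$; it is even or odd according to the parity of its number of edges. The Alon--Tarsi number $AT(G)$ is the minimum $k$ such that there is an orientation $D$ of $G$ in which every vertex has outdegree less than $k$ and the number of even Eulerian subdigraphs of $D$ differs from the number of odd Eulerian subdigraphs. *)

From mathcomp Require Import all_boot.
Set Implicit Arguments. Unset Strict Implicit. Unset Printing Implicit Defensive.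

Definition simple_graph (T : finType) (g : rel T) : Prop :=
  (forall x, ~~ g x x) /\ (forall x y, g x y = g y x).

Definition orientation (T : finType) (g : rel T) (D : rel T) : Prop :=
  (forall x y, D x y -> g x y) /\
  (forall x y, g x y -> (D x y (+) D y x)).

Definition outdeg (T : finType) (D : rel T) (x : T) : nat := #|[set y | D x y]|.

Definition arcs (T : finType) (D : rel T) : {set T * T} :=
  [set a | D a.1 a.2].

Definition eulerian_sub (T : finType) (D : rel T) (F : {set T * T}) : bool :=
  (F \subset arcs D) &&
  [forall v, #|[set a in F | a.1 == v]| == #|[set a in F | a.2 == v]|].

Definition num_even_eulerian (T : finType) (D : rel T) : nat :=
  #|[set F : {set T * T} | eulerian_sub D F & ~~ odd #|F|]|.

Definition num_odd_eulerian (T : finType) (D : rel T) : nat :=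
  #|[set F : {set T * T} | eulerian_sub D F & odd #|F|]|.

Definition AT_admissible (T : finType) (g : rel T) (k : nat) : Prop :=
  exists D : rel T, orientation g D /\
    (forall x, outdeg D x < k) /\
    num_even_eulerian D <> num_odd_eulerian D.

Definition AT_number_is (T : finType) (g : rel T) (k : nat) : Prop :=
  AT_admissible g k /\ (forall k', AT_admissible g k' -> k <= k').

(* The graph G_n on vertex set 'I_n, with m = (n-2)/2:
   Q1 = {0,..,m-1}, Q2 = {m,..,2m-1}, u = 2m, v = 2m+1. *)
Definition Gn_part (n : nat) (i : 'I_n) : nat :=
  let m := (n - 2) %/ 2 in
  if i < m then 0 else if i < 2 * m then 1 else 2.

Definition Gn (n : nat) : rel 'I_n := fun i j =>
  (i != j) &&
  [|| (Gn_part i == 0) && (Gn_part j == 0),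
      (Gn_part i == 1) && (Gn_part j == 1),
      (Gn_part i == 2) && (Gn_part j != 2) |
      (Gn_part i != 2) && (Gn_part j == 2)].

From mathcomp Require Import all_boot all_order all_algebra.
From mathcomp Require Import zify ring.
Set Implicit Arguments. Unset Strict Implicit. Unset Printing Implicit Defensive.
Import Order.TTheory GRing.Theory Num.Theory.

(* Lower bound: Q1 together with u is a clique on n/2 vertices, so G_n has no proper
   (n/2 - 1)-colouring, and the Alon-Tarsi argument gives AT >= chi.  If every outdegree
   d x is below N, sum the graph polynomial prod_(x -> y) (c x - c y) over all colourings
   c with values in [0, N), weighted by prod_x (-1)^(c x) 'C(d x, c x).  Since the d-th
   finite difference of t^j vanishes for j < d, these weights kill every monomial of
   this homogeneous polynomial except prod_x c_x^(d x), whose coefficient is the signed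
   count of Eulerian subdigraphs.  A monochromatic arc in every colouring makes the sum
   0, so even = odd.

   Upper bound: orient Q1 and Q2 transitively and u -> Q1 -> v -> Q2 -> u, so that all
   outdegrees are at most n/2 - 1.  The automorphism exchanging Q1 with Q2 and u with v
   maps the acyclic side digraph u -> Q1 -> v onto the remaining arcs, so an Eulerian
   subdigraph is F1 + phi(G) with F1, G side arc sets that are balanced on Q1 and carry
   the same flow out of u.  Hence sum_F (-1)^|F| = sum_j g_j^2, where g_j is the signed
   count of side sets of flow j, and g_0 = 1 by acyclicity. *)

Lemma exists_lt_of_sum_eq (I : finType) (f g : I -> nat) :
  \sum_i f i = \sum_i g i -> ~~ [forall i, f i == g i] -> exists i, f i < g i.
Proof.
move=> eq_sum neq; apply/existsP; apply: contraNT neq => /existsPn no_lt.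
apply/forallP => i; rewrite eq_sym.
have le_gf j : true -> g j <= f j ?= iff (g j == f j).
  by move=> _; apply/leqif_eq; rewrite leqNgt no_lt.
by have [_] := leqif_sum le_gf; rewrite eq_sum eqxx => /esym/forallP; apply.
Qed.

Lemma sum_fibre_pairs (I J : finType) (f : I -> J) (s : I -> int) :
  (\sum_i \sum_(i' | f i' == f i) s i * s i' = \sum_j (\sum_(i | f i == j) s i) ^+ 2)%R.
Proof.
rewrite (partition_big f predT) //=; apply: eq_bigr => j _.
by rewrite expr2 mulr_suml; apply: eq_bigr => i /eqP <-; rewrite mulr_sumr.
Qed.

Section BinomialMoments.
Local Open Scope ring_scope.

Definition binom_moment (d j : nat) : int :=
  \sum_(t < d.+1) (-1) ^+ t * 'C(d, t)%:R * t%:R ^+ j.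

Lemma binom_moment0 d : binom_moment d 0 = (d == 0)%:R.
Proof.
rewrite -expr0n -[0 in RHS](addNr 1) exprD1n.
by apply: eq_bigr => i _; rewrite expr0 mulr1 mulr_natr.
Qed.

Lemma binom_momentSS d j :
  binom_moment d.+1 j.+1 =
  - d.+1%:R * \sum_(i < j.+1) 'C(j, i)%:R * binom_moment d i.
Proof.
rewrite /binom_moment big_ord_recl /= expr0n /= mulr0 add0r mulr_sumr.
under [RHS]eq_bigr => i _ do rewrite mulrA mulr_sumr.
rewrite [RHS]exchange_big /=; apply: eq_bigr => s _.
rewrite /bump leq0n add1n.
have binS : ('C(d.+1, s.+1) * s.+1 = d.+1 * 'C(d, s))%N.
  by rewrite mulnC -mul_bin_diag.
have expS : (s.+1%:R : int) ^+ j = \sum_(i < j.+1) s%:R ^+ i *+ 'C(j, i).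
  by rewrite -exprD1n natr1.
rewrite [_%:R ^+ j.+1]exprS expS mulr_sumr mulr_sumr; apply: eq_bigr => i _.
transitivity ((-1) ^+ s.+1 * ('C(d.+1, s.+1) * s.+1)%N%:R
              * (s%:R ^+ i * 'C(j, i)%:R) :> int).
  rewrite natrM -natr1 mulr_natr; ring.
rewrite binS natrM exprS; ring.
Qed.

Lemma binom_moment_small i d :
  (i <= d)%N -> binom_moment d i = (i == d)%:R * ((-1) ^+ d * d`!%:R).
Proof.
elim/ltn_ind: i d => -[_ d _ | i IH [//|d] le_id].
  by rewrite binom_moment0; case: d => [|d]; rewrite ?mul1r ?mul0r.
rewrite binom_momentSS eqSS.
have IHd (k : 'I_i.+1) : binom_moment d k = ((k : nat) == d)%:R * ((-1) ^+ d * d`!%:R).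
  by apply: IH => //; have := ltn_ord k; lia.
under eq_bigr => k _ do rewrite IHd.
have [<- | ne_id] := eqVneq i d.
  rewrite big_ord_recr /= big1 => [|k _]; last by rewrite (ltn_eqF (ltn_ord k)) !mul0r mulr0.
  rewrite add0r eqxx binn factS natrM exprS !mul1r.
  by rewrite -mulNrn mulr_natl; ring.
rewrite big1 ?mulr0 ?mul0r // => k _.
have /ltn_eqF -> : (k < d)%N by have := ltn_ord k; lia.
by rewrite mul0r mulr0.
Qed.

Lemma binom_moment_lt i d : (i < d)%N -> binom_moment d i = 0.
Proof. by move=> lt_id; rewrite binom_moment_small (ltnW lt_id, ltn_eqF lt_id) ?mul0r. Qed.

Lemma binom_moment_diag_neq0 d : binom_moment d d != 0.
Proof.
rewrite binom_moment_small // eqxx mul1r mulf_eq0 signr_eq0 pnatr_eq0 /=.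
by rewrite -lt0n fact_gt0.
Qed.

Lemma binom_moment_widen N d j : (d < N)%N ->
  \sum_(t < N) (-1) ^+ t * 'C(d, t)%:R * t%:R ^+ j = binom_moment d j.
Proof.
move=> lt_dN; rewrite /binom_moment.
rewrite (big_ord_widen N (fun t : nat => (-1) ^+ t * 'C(d, t)%:R * t%:R ^+ j) lt_dN).
rewrite [RHS]big_mkcond; apply: eq_bigr => t _.
by case: ltnP => // lt_dt; rewrite bin_small // mulr0 mul0r.
Qed.

End BinomialMoments.

Definition deg_in (T : finType) (e : T * T -> T) (F : {set T * T}) (x : T) : nat :=
  #|[set a in F | e a == x]|.
Notation outdeg_in := (deg_in fst).
Notation indeg_in := (deg_in snd).

Section ArcSets.
Variable T : finType.
Implicit Types (F G : {set T * T}) (e : T * T -> T) (x : T).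

Lemma eulerian_subE (D : rel T) F :
  eulerian_sub D F = (F \subset arcs D) && [forall x, outdeg_in F x == indeg_in F x].
Proof. by []. Qed.

Lemma outdeg_arcs (D : rel T) x : outdeg D x = outdeg_in (arcs D) x.
Proof.
have pair_inj : injective (@pair T T x) by move=> y1 y2 [].
rewrite /outdeg /deg_in -(card_imset _ pair_inj); apply: eq_card => -[x' y].
rewrite !inE /=; apply/imsetP/andP => [[y' Dxy' [-> ->]]|[Dx'y /eqP Ex]].
  by rewrite inE in Dxy'; split.
by exists y; rewrite ?inE -?Ex.
Qed.

Lemma deg_inID e F G x : deg_in e (F :&: G) x + deg_in e (F :\: G) x = deg_in e F x.
Proof.
rewrite /deg_in -(cardsID G [set a in F | e a == x]).
congr (_ + _); apply: eq_card => a; rewrite !inE;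
  by case: (a \in F); case: (a \in G); case: (e a == x).
Qed.

Lemma sum_deg_in e F : \sum_x deg_in e F x = #|F|.
Proof.
rewrite -[#|F|]sum1_card (partition_big e predT) //=; apply: eq_bigr => x _.
by rewrite -[LHS]sum1_card; apply: eq_bigl => a; rewrite inE.
Qed.

Lemma prod_deg_in (R : comPzSemiRingType) e (f : T -> R) F :
  (\prod_(a in F) f (e a) = \prod_x f x ^+ deg_in e F x)%R.
Proof.
rewrite (partition_big e predT) //=; apply: eq_bigr => x _.
rewrite (eq_bigr (fun _ => f x)) => [|a /andP[_ /eqP->]] //.
by rewrite prodr_const; congr (_ ^+ _)%R; apply: eq_card => a; rewrite inE.
Qed.

Lemma deg_in_set0 e x : deg_in e set0 x = 0.
Proof. by apply/eqP; rewrite cards_eq0; apply/eqP/setP => a; rewrite !inE. Qed.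

Lemma balanced_potential_eq0 (r : T -> nat) F :
  (forall a, a \in F -> r a.2 < r a.1) ->
  (forall x, outdeg_in F x = indeg_in F x) -> F = set0.
Proof.
move=> r_dec bal; apply/eqP/contraT => /set0Pn[a0 a0F].
case: (arg_maxnP (fun a => r a.1) a0F) => a aF a_max.
have : 0 < indeg_in F a.1 by rewrite -bal; apply/card_gt0P; exists a; rewrite !inE eqxx andbT.
case/card_gt0P => b; rewrite inE => /andP[bF /eqP b_to_a].
by have := a_max b bF; rewrite /= -b_to_a leqNgt r_dec.
Qed.

End ArcSets.

Lemma sum_sign_eulerian (T : finType) (D : rel T) :
  (\sum_(F | eulerian_sub D F) (-1) ^+ #|F| =
   (num_even_eulerian D)%:R - (num_odd_eulerian D)%:R :> int)%R.
Proof.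
rewrite (bigID (fun F : {set T * T} => odd #|F|)) /= addrC.
under eq_bigr => F /andP[_ /negbTE even_F] do rewrite -signr_odd even_F expr0.
under [X in (_ + X)%R]eq_bigr => F /andP[_ odd_F] do rewrite -signr_odd odd_F expr1.
rewrite !sumr_const mulNrn; congr (_%:R - _%:R)%R.
  by apply: eq_card => F; rewrite !inE.
by apply: eq_card => F; rewrite !inE.
Qed.

Section AlonTarsi.
Local Open Scope ring_scope.
Variables (T : finType) (D : rel T) (N : nat).
Implicit Types (c : {ffun T -> 'I_N}) (J : {set T * T}) (x : T).

Definition graph_poly c : int := \prod_(a in arcs D) ((c a.1 : nat)%:R - (c a.2 : nat)%:R).

(* Picking the head of every arc of J and the tail of every other arc in the
   expansion of [graph_poly] gives the monomial with these exponents. *)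
Definition monomial_exp J x : nat := (indeg_in J x + outdeg_in (arcs D :\: J) x)%N.

Lemma graph_polyE c : graph_poly c =
  \sum_(J : {set T * T} | J \subset arcs D)
    (-1) ^+ #|J| * \prod_x (c x : nat)%:R ^+ monomial_exp J x.
Proof.
pose head a : int := if a \in arcs D then - (c a.2 : nat)%:R else 0.
pose tail a : int := if a \in arcs D then (c a.1 : nat)%:R else 1.
rewrite /graph_poly big_mkcond (eq_bigr (fun a => head a + tail a)) => [|a _]; last first.
  by rewrite /head /tail; case: (a \in arcs D); rewrite ?add0r // addrC.
rewrite bigA_distr [RHS]big_mkcond; apply: eq_bigr => J _.
case: ifP => [sJ | /negbT/subsetPn[a aJ naA]]; last first.
  by rewrite (bigD1 a) //= aJ /head (negbTE naA) mul0r.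
rewrite (bigID (mem J)) /= (eq_bigr (fun a => - (c a.2 : nat)%:R)) => [|a aJ]; last first.
  by rewrite aJ /head (subsetP sJ a aJ).
rewrite prodrN -mulrA; congr (_ * _).
rewrite /monomial_exp; under [RHS]eq_bigr => x _ do rewrite exprD.
rewrite big_split /= -!(prod_deg_in _ (fun x => (c x : nat)%:R)); congr (_ * _).
rewrite [LHS]big_mkcond [RHS]big_mkcond; apply: eq_bigr => a _.
by rewrite /tail !inE; case: (a \in J); case: (D a.1 a.2).
Qed.

Lemma sum_monomial_exp J :
  J \subset arcs D -> (\sum_x monomial_exp J x = \sum_x outdeg D x)%N.
Proof.
move=> sJ; rewrite big_split /= !sum_deg_in.
under [RHS]eq_bigr => x _ do rewrite outdeg_arcs.
by rewrite sum_deg_in -(cardsID J (arcs D)) (setIidPr sJ).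
Qed.

Lemma monomial_exp_outdeg J x : J \subset arcs D ->
  (monomial_exp J x + outdeg_in J x = outdeg D x + indeg_in J x)%N.
Proof.
move=> sJ; rewrite outdeg_arcs -(deg_inID _ (arcs D) J) (setIidPr sJ) /monomial_exp.
lia.
Qed.

Definition colouring_weight c : int :=
  \prod_x ((-1) ^+ c x * 'C(outdeg D x, c x)%:R).

Hypothesis outdeg_lt : forall x, (outdeg D x < N)%N.

Lemma sum_weighted_monomial (k : T -> nat) :
  \sum_(c : {ffun T -> 'I_N}) colouring_weight c * \prod_x (c x : nat)%:R ^+ k x =
  \prod_x binom_moment (outdeg D x) (k x).
Proof.
under [LHS]eq_bigr => c _ do rewrite /colouring_weight -big_split /=.
rewrite -(bigA_distr_bigA (fun x (t : 'I_N) =>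
  (-1) ^+ t * 'C(outdeg D x, t)%:R * (t : nat)%:R ^+ k x)) /=.
by apply: eq_bigr => x _; rewrite binom_moment_widen.
Qed.

Lemma sum_weighted_expansion_term J : J \subset arcs D ->
  \sum_(c : {ffun T -> 'I_N}) colouring_weight c * \prod_x (c x : nat)%:R ^+ monomial_exp J x =
  (eulerian_sub D J)%:R * \prod_x binom_moment (outdeg D x) (outdeg D x).
Proof.
move=> sJ; rewrite sum_weighted_monomial eulerian_subE sJ /=.
have exp_eq x : (monomial_exp J x == outdeg D x) = (outdeg_in J x == indeg_in J x).
  by have := monomial_exp_outdeg x sJ => ?; apply/eqP/eqP; lia.
rewrite -(eq_forallb exp_eq); case: forallP => [bal | /forallP unbal].
  by rewrite mul1r; apply: eq_bigr => x _; rewrite (eqP (bal x)).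
have [x lt_x] := exists_lt_of_sum_eq (sum_monomial_exp sJ) unbal.
by rewrite mul0r (bigD1 x) //= binom_moment_lt // mul0r.
Qed.

Hypothesis uncolourable : forall c : T -> 'I_N, exists x y, D x y /\ c x = c y.

Lemma num_even_eq_odd_eulerian : num_even_eulerian D = num_odd_eulerian D.
Proof.
pose C := \prod_x binom_moment (outdeg D x) (outdeg D x).
have sum_poly0 : \sum_(c : {ffun T -> 'I_N}) colouring_weight c * graph_poly c = 0.
  apply: big1 => c _; have [x [y [Dxy cxy]]] := uncolourable c.
  by rewrite /graph_poly (bigD1 (x, y)) ?inE //= cxy subrr mul0r mulr0.
have sum_polyE : \sum_(c : {ffun T -> 'I_N}) colouring_weight c * graph_poly c =
    C * ((num_even_eulerian D)%:R - (num_odd_eulerian D)%:R).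
  under eq_bigr => c _ do rewrite graph_polyE mulr_sumr.
  rewrite exchange_big -sum_sign_eulerian mulr_sumr /= [LHS]big_mkcond [RHS]big_mkcond.
  apply: eq_bigr => J _; rewrite eulerian_subE.
  case: ifP => [sJ | _]; last by rewrite andFb.
  under eq_bigr => c _ do rewrite mulrCA.
  rewrite -mulr_sumr sum_weighted_expansion_term // eulerian_subE sJ.
  by case: ifP; rewrite ?mul0r ?mulr0 // mul1r mulrC.
move/eqP: sum_poly0; rewrite sum_polyE mulf_eq0 subr_eq0 eqr_nat.
have /negbTE-> : C != 0 by apply/prodf_neq0 => x _; apply: binom_moment_diag_neq0.
by move/eqP.
Qed.

End AlonTarsi.

Lemma AT_admissible_gt (T : finType) (g : rel T) (N k : nat) :
  (forall c : T -> 'I_N, exists x y, g x y /\ c x = c y) ->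
  AT_admissible g k -> N < k.
Proof.
move=> uncol [D [[_ gD] [lt_k neq_eo]]]; rewrite ltnNge; apply/negP => le_kN.
apply: neq_eo; apply: (@num_even_eq_odd_eulerian _ D N) => [x | c].
  exact: leq_trans (lt_k x) le_kN.
have [x [y [gxy cxy]]] := uncol c.
have := gD x y gxy; case: (boolP (D x y)) => [Dxy _ | _ /= Dyx].
  by exists x, y.
by exists y, x.
Qed.

Lemma clique_uncolourable (T : finType) (g : rel T) (N k : nat) (f : 'I_k -> T) :
  N < k -> (forall i j, i != j -> g (f i) (f j)) ->
  forall c : T -> 'I_N, exists x y, g x y /\ c x = c y.
Proof.
move=> lt_Nk clique c.
have /injectivePn[i [j ne_ij eq_c]] : ~~ injectiveb (c \o f).
  by apply: contraTN lt_Nk => /injectiveP/leq_card; rewrite !card_ord -leqNgt.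
by exists (f i), (f j); split; [exact: clique | ].
Qed.

Section SymmetricOrientation.
Variables (T : finType) (D : rel T) (phi : T -> T) (Q : pred T) (u v : T) (r : T -> nat).
Implicit Types (F G : {set T * T}) (x y : T).

Hypothesis phiK : involutive phi.
Hypothesis arc_phi : forall x y, D (phi x) (phi y) = D x y.
Hypothesis phi_u : phi u = v.
Hypothesis Q_phi : forall x, Q x -> ~~ Q (phi x).
Hypothesis Q_u : ~~ Q u.
Hypothesis Q_v : ~~ Q v.
Hypothesis neq_uv : u != v.

Definition side_arc x y := [|| (x == u) && Q y, Q x && Q y | Q x && (y == v)].

Hypothesis arc_side : forall x y, D x y -> side_arc x y || side_arc (phi x) (phi y).
Hypothesis side_potential : forall x y, D x y -> side_arc x y -> r y < r x.

Definition phi2 (a : T * T) := (phi a.1, phi a.2).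
Definition side_arcs := [set a | D a.1 a.2 && side_arc a.1 a.2].
Definition Q_balanced F := [forall x, Q x ==> (outdeg_in F x == indeg_in F x)].
Definition flow F := outdeg_in F u.

Lemma phi_v : phi v = u.
Proof. by rewrite -phi_u phiK. Qed.

Lemma phi_eq_u x : (phi x == u) = (x == v).
Proof. by rewrite -phi_v (inj_eq (can_inj phiK)). Qed.

Lemma phi_eq_v x : (phi x == v) = (x == u).
Proof. by rewrite -phi_u (inj_eq (can_inj phiK)). Qed.

Lemma Q_neq_u x : Q x -> x != u.
Proof. by apply: contraTneq => ->. Qed.

Lemma Q_neq_v x : Q x -> x != v.
Proof. by apply: contraTneq => ->. Qed.

Lemma phi2K : involutive phi2.
Proof. by case=> x y; rewrite /phi2 /= !phiK. Qed.

Lemma mem_phi2 G a : (a \in phi2 @: G) = (phi2 a \in G).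
Proof. by rewrite -[a in LHS]phi2K mem_imset //; apply: can_inj phi2K. Qed.

Lemma deg_in_phi2 e G x :
  (forall a, e (phi2 a) = phi (e a)) -> deg_in e (phi2 @: G) x = deg_in e G (phi x).
Proof.
move=> e_phi2; rewrite /deg_in -(card_imset _ (can_inj phi2K)); apply: eq_card => a.
rewrite !inE !mem_phi2 !inE e_phi2 mem_imset; last exact: can_inj phi2K.
by rewrite -[x in phi _ == x]phiK (inj_eq (can_inj phiK)).
Qed.

Lemma side_tail x y : side_arc x y -> (x == u) || Q x.
Proof. by case/or3P=> /andP[-> _]; rewrite ?orbT. Qed.

Lemma side_head x y : side_arc x y -> (y == v) || Q y.
Proof. by case/or3P=> /andP[_ ->]; rewrite ?orbT. Qed.

Lemma side_arc_phi x y : side_arc x y -> ~~ side_arc (phi x) (phi y).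
Proof.
move/side_tail => tail_x; apply/negP => /side_tail; rewrite phi_eq_u.
case/orP: tail_x => [/eqP-> | Qx]; first by rewrite phi_u (negbTE Q_v) orbF (negbTE neq_uv).
by rewrite (negbTE (Q_phi Qx)) orbF (negbTE (Q_neq_v Qx)).
Qed.

Lemma side_outdeg0 F x : F \subset side_arcs -> ~~ Q x -> x != u -> outdeg_in F x = 0.
Proof.
move=> /subsetP sF nQx ne_xu; apply/eqP; rewrite cards_eq0; apply/eqP/setP => a.
rewrite !inE; apply/negbTE/andP => -[/sF + /eqP a1]; rewrite inE a1 => /andP[_ /side_tail].
by rewrite (negbTE nQx) (negbTE ne_xu).
Qed.

Lemma side_indeg0 F x : F \subset side_arcs -> ~~ Q x -> x != v -> indeg_in F x = 0.
Proof.
move=> /subsetP sF nQx ne_xv; apply/eqP; rewrite cards_eq0; apply/eqP/setP => a.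
rewrite !inE; apply/negbTE/andP => -[/sF + /eqP a2]; rewrite inE a2 => /andP[_ /side_head].
by rewrite (negbTE nQx) (negbTE ne_xv).
Qed.

Lemma side_outdeg_phi0 F x : F \subset side_arcs -> Q x -> outdeg_in F (phi x) = 0.
Proof. by move=> sF Qx; rewrite side_outdeg0 ?Q_phi // phi_eq_u Q_neq_v. Qed.

Lemma side_indeg_phi0 F x : F \subset side_arcs -> Q x -> indeg_in F (phi x) = 0.
Proof. by move=> sF Qx; rewrite side_indeg0 ?Q_phi // phi_eq_v Q_neq_u. Qed.

Lemma sum_split_uv (f : T -> nat) :
  \sum_x f x = f u + f v + \sum_(x | (x != u) && (x != v)) f x.
Proof. by rewrite (bigD1 u) // (bigD1 v) 1?eq_sym //= addnA. Qed.

Lemma flow_conservation F : F \subset side_arcs -> Q_balanced F -> flow F = indeg_in F v.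
Proof.
move=> sF /forallP balF.
have := sum_deg_in fst F; rewrite -(sum_deg_in snd F) !sum_split_uv.
rewrite (side_outdeg0 sF Q_v) 1?eq_sym // (side_indeg0 sF Q_u) //.
rewrite (eq_bigr (fun x => indeg_in F x)) => [|x /andP[ne_xu ne_xv]].
  by rewrite /flow; lia.
have [Qx | nQx] := boolP (Q x); first exact/eqP/(implyP (balF x)).
by rewrite side_outdeg0 // side_indeg0.
Qed.

Lemma side_flow0_eq0 F : F \subset side_arcs -> Q_balanced F -> flow F = 0 -> F = set0.
Proof.
move=> sF balF flow0; apply: (@balanced_potential_eq0 _ r) => [a /(subsetP sF) | x].
  by rewrite inE => /andP[]; apply: side_potential.
have [Qx | nQx] := boolP (Q x); first exact/eqP/(implyP (forallP balF x)).
have [->|ne_xu] := eqVneq x u; first by rewrite -/(flow F) flow0 side_indeg0.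
have [->|ne_xv] := eqVneq x v.
  by rewrite -(flow_conservation sF balF) flow0 side_outdeg0 // eq_sym.
by rewrite side_outdeg0 // side_indeg0.
Qed.

Lemma disjoint_side_phi2 F1 G : F1 \subset side_arcs -> G \subset side_arcs ->
  [disjoint F1 & phi2 @: G].
Proof.
move=> /subsetP sF1 /subsetP sG; rewrite -setI_eq0; apply/eqP/setP => a.
rewrite !inE mem_phi2; apply/negbTE/andP => -[/sF1 + /sG]; rewrite !inE.
by case/andP=> _ /side_arc_phi /negbTE-> /andP[].
Qed.

Lemma deg_in_split e F1 G x : F1 \subset side_arcs -> G \subset side_arcs ->
  (forall a, e (phi2 a) = phi (e a)) ->
  deg_in e (F1 :|: phi2 @: G) x = deg_in e F1 x + deg_in e G (phi x).
Proof.
move=> sF1 sG e_phi2; rewrite -(deg_inID _ _ F1) setUK setDUl setDv set0U.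
by rewrite (setDidPl _) ?deg_in_phi2 // disjoint_sym disjoint_side_phi2.
Qed.

Lemma eulerian_split F1 G : F1 \subset side_arcs -> G \subset side_arcs ->
  eulerian_sub D (F1 :|: phi2 @: G) = [&& Q_balanced F1, Q_balanced G & flow F1 == flow G].
Proof.
move=> sF1 sG.
have sub_arcs : F1 :|: phi2 @: G \subset arcs D.
  apply/subsetP => a; rewrite inE mem_phi2 => /orP[/(subsetP sF1) | /(subsetP sG)];
  by rewrite !inE ?arc_phi => /andP[].
pose bal x := outdeg_in F1 x + outdeg_in G (phi x) == indeg_in F1 x + indeg_in G (phi x).
have -> : eulerian_sub D (F1 :|: phi2 @: G) = [forall x, bal x].
  rewrite eulerian_subE sub_arcs; apply: eq_forallb => x.
  by rewrite !(deg_in_split x sF1 sG (fun=> erefl)).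
have bal_Q x : Q x -> bal x = (outdeg_in F1 x == indeg_in F1 x).
  by move=> Qx; rewrite /bal (side_outdeg_phi0 sG Qx) (side_indeg_phi0 sG Qx) !addn0.
have bal_phiQ y : Q y -> bal (phi y) = (outdeg_in G y == indeg_in G y).
  by move=> Qy; rewrite /bal !phiK (side_outdeg_phi0 sF1 Qy) (side_indeg_phi0 sF1 Qy).
have bal_u : bal u = (flow F1 == indeg_in G v).
  by rewrite /bal phi_u (side_outdeg0 sG Q_v) 1?eq_sym // (side_indeg0 sF1 Q_u) // addn0.
have bal_v : bal v = (flow G == indeg_in F1 v).
  by rewrite /bal phi_v (side_outdeg0 sF1 Q_v) 1?eq_sym // (side_indeg0 sG Q_u) // addn0 eq_sym.
apply/forallP/and3P => [bal_all | [balF1 balG /eqP eq_flow] x].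
  have balG : Q_balanced G by apply/forallP => y; apply/implyP => Qy; rewrite -bal_phiQ.
  split=> //; first by apply/forallP => x; apply/implyP => Qx; rewrite -bal_Q.
  by rewrite (flow_conservation sG balG) -bal_u.
have [Qx | nQx] := boolP (Q x); first by rewrite bal_Q // (implyP (forallP balF1 x)).
have [Qphix | nQphix] := boolP (Q (phi x)).
  by rewrite -[x]phiK bal_phiQ // (implyP (forallP balG _)).
have [->|ne_xu] := eqVneq x u; first by rewrite bal_u eq_flow flow_conservation.
have [->|ne_xv] := eqVneq x v; first by rewrite bal_v -eq_flow flow_conservation.
by rewrite /bal !side_outdeg0 ?side_indeg0 ?phi_eq_u ?phi_eq_v.
Qed.

Lemma card_split F1 G : F1 \subset side_arcs -> G \subset side_arcs ->
  #|F1 :|: phi2 @: G| = #|F1| + #|G|.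
Proof.
move=> sF1 sG; rewrite cardsU (card_imset _ (can_inj phi2K)).
by move: (disjoint_side_phi2 sF1 sG); rewrite -setI_eq0 => /eqP->; rewrite cards0 subn0.
Qed.

Lemma side_phi2F a : a \in side_arcs -> (phi2 a \in side_arcs) = false.
Proof. by rewrite !inE => /andP[_ /side_arc_phi/negbTE->]; rewrite andbF. Qed.

Definition join_arcs (p : {set T * T} * {set T * T}) := p.1 :|: phi2 @: p.2.
Definition split_arcs F := (F :&: side_arcs, phi2 @: (F :&: phi2 @: side_arcs)).

Lemma split_arcsK F : F \subset side_arcs :|: phi2 @: side_arcs ->
  join_arcs (split_arcs F) = F.
Proof.
move=> /subsetP sF; apply/setP => a; rewrite !inE !mem_phi2 phi2K !inE.
by case aF: (a \in F) => //=; have := sF a aF; rewrite !inE mem_phi2.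
Qed.

Lemma join_arcsK F1 G : F1 \subset side_arcs -> G \subset side_arcs ->
  split_arcs (join_arcs (F1, G)) = (F1, G).
Proof.
move=> /subsetP sF1 /subsetP sG; congr (_, _); apply/setP => a.
  rewrite in_setI in_setU mem_phi2; case aF1: (a \in F1) => /=; first exact: sF1.
  by apply/negbTE/andP => -[/sG/side_phi2F]; rewrite phi2K => ->.
rewrite mem_phi2 !inE !mem_phi2 phi2K; case aG: (a \in G); first by rewrite orbT sG.
by rewrite orbF; apply/negbTE/andP => -[/sF1/side_phi2F]; rewrite phi2K => ->.
Qed.

Lemma sum_side_pairs (h : {set T * T} -> int) :
  (forall F, ~~ (F \subset side_arcs :|: phi2 @: side_arcs) -> h F = 0) ->
  (\sum_F h F = \sum_(F1 : {set T * T} | F1 \subset side_arcs)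
                 \sum_(G : {set T * T} | G \subset side_arcs) h (F1 :|: phi2 @: G))%R.
Proof.
move=> h0; rewrite (bigID (fun F => F \subset side_arcs :|: phi2 @: side_arcs)) /=.
rewrite [X in (_ + X)%R]big1 ?addr0 // pair_big /=.
rewrite (reindex_onto join_arcs split_arcs split_arcsK); apply: eq_bigl => -[F1 G] /=.
have [/andP[sF1 sG] | ns] := boolP ((F1 \subset side_arcs) && (G \subset side_arcs)).
  by rewrite join_arcsK // eqxx andbT setUSS ?imsetS.
apply/negbTE; apply: contra ns => /andP[_ /eqP[<- <-]].
rewrite subsetIr; apply/subsetP => a.
by rewrite mem_phi2 in_setI mem_phi2 phi2K => /andP[].
Qed.

Definition half_sign F : int := (((F \subset side_arcs) && Q_balanced F)%:R * (-1) ^+ #|F|)%R.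

Lemma sum_sign_eulerian_split :
  (\sum_(F | eulerian_sub D F) (-1) ^+ #|F| =
   \sum_F1 \sum_(G | flow G == flow F1) half_sign F1 * half_sign G)%R.
Proof.
have side_cover F : eulerian_sub D F -> F \subset side_arcs :|: phi2 @: side_arcs.
  case/andP => sF _; apply: subset_trans sF _; apply/subsetP => a.
  rewrite !inE mem_phi2 !inE /= arc_phi.
  by move=> Da; rewrite Da -andb_orr arc_side.
rewrite big_mkcond sum_side_pairs => [|F ncov]; last first.
  by case: ifP => // /side_cover; rewrite (negbTE ncov).
rewrite [RHS](bigID (fun F1 => F1 \subset side_arcs)) /=.
rewrite [X in (_ + X)%R]big1 ?addr0; last first.
  by move=> F1 /negbTE nsF1; apply: big1 => G _; rewrite /half_sign nsF1 /= !mul0r.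
apply: eq_bigr => F1 sF1.
rewrite [RHS](bigID (fun G => G \subset side_arcs)) /=.
rewrite [X in (_ + X)%R]big1 ?addr0; last first.
  by move=> G /andP[_ /negbTE nsG]; rewrite /half_sign nsG /= mul0r mulr0.
rewrite [RHS]big_mkcondl; apply: eq_bigr => G sG.
rewrite eulerian_split // card_split // exprD /half_sign sF1 sG /= [flow G == _]eq_sym.
by case: (Q_balanced F1); case: (Q_balanced G); case: (flow F1 == flow G);
  rewrite /= ?mul1r ?mul0r ?mulr0.
Qed.

Lemma half_sign_set0 : half_sign set0 = 1%R.
Proof.
rewrite /half_sign sub0set cards0 /=.
rewrite (_ : Q_balanced set0) ?mul1r //.
by apply/forallP => x; rewrite !deg_in_set0 eqxx implybT.
Qed.

Lemma sum_half_sign_flow0 :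
  (\sum_(F | flow F == 0) half_sign F = 1)%R.
Proof.
rewrite (bigD1 set0) /flow ?deg_in_set0 //= big1 ?addr0 ?half_sign_set0 //.
move=> F /andP[/eqP flow0 nF0].
rewrite /half_sign; case: andP => [[sF balF] | _]; last by rewrite mul0r.
by rewrite (side_flow0_eq0 sF balF flow0) eqxx in nF0.
Qed.

Lemma num_even_neq_odd_eulerian : num_even_eulerian D <> num_odd_eulerian D.
Proof.
move=> eq_eo; have := sum_sign_eulerian D; rewrite eq_eo subrr sum_sign_eulerian_split.
have flow_lt F : flow F < #|{: T * T}|.+1 by rewrite ltnS max_card.
pose flow_ord F : 'I_#|{: T * T}|.+1 := Ordinal (flow_lt F).
rewrite (eq_bigr (fun F1 =>
  \sum_(G | flow_ord G == flow_ord F1) half_sign F1 * half_sign G))%R //.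
rewrite sum_fibre_pairs (bigD1 (flow_ord set0)) //=.
rewrite (eq_bigl (fun F => flow F == 0)) => [|F]; last by rewrite -val_eqE /= /flow deg_in_set0.
rewrite sum_half_sign_flow0 expr1n; apply/eqP.
by rewrite paddr_eq0 ?oner_eq0 // sumr_ge0 // => j _; apply: sqr_ge0.
Qed.

End SymmetricOrientation.

Lemma card_le_size_val n (P : {pred 'I_n}) (s : seq nat) :
  (forall y, y \in P -> (y : nat) \in s) -> #|P| <= size s.
Proof.
move=> sub_s; rewrite cardE -(size_map (@nat_of_ord n)); apply: uniq_leq_size.
  by rewrite map_inj_uniq ?enum_uniq //; apply: val_inj.
by move=> j /mapP[y]; rewrite mem_enum => Py ->; apply: sub_s.
Qed.

Section TwoCliquesJoinTwoVertices.
Variable m : nat.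
Notation n := m.*2.+2.

Definition Gn_u : 'I_n := inord m.*2.
Definition Gn_v : 'I_n := inord m.*2.+1.

Definition Gn_swap (x : 'I_n) : 'I_n :=
  inord (if x < m then x + m else if x < m.*2 then x - m
         else if x == m.*2 :> nat then m.*2.+1 else m.*2).

Definition Gn_orient : rel 'I_n := fun x y =>
  [|| [&& x < m, y < m & y < x],
      [&& m <= x, x < m.*2, m <= y, y < m.*2 & y < x],
      (x == m.*2 :> nat) && (y < m),
      (x < m) && (y == m.*2.+1 :> nat),
      [&& x == m.*2.+1 :> nat, m <= y & y < m.*2] |
      [&& m <= x, x < m.*2 & y == m.*2 :> nat]].

Definition in_Q1 (x : 'I_n) := x < m.

Definition Gn_potential (x : 'I_n) : nat :=
  if x < m then x.+1 else if x == m.*2 :> nat then m.+1 else 0.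

Lemma val_Gn_u : (Gn_u : nat) = m.*2. Proof. by rewrite inordK. Qed.
Lemma val_Gn_v : (Gn_v : nat) = m.*2.+1. Proof. by rewrite inordK. Qed.

Lemma val_Gn_swap x : (Gn_swap x : nat) =
  if x < m then x + m else if x < m.*2 then x - m
  else if x == m.*2 :> nat then m.*2.+1 else m.*2.
Proof. by rewrite inordK //; have := ltn_ord x; repeat case: ifP; lia. Qed.

Lemma Gn_swapK : involutive Gn_swap.
Proof.
move=> x; apply/val_inj => /=; rewrite !val_Gn_swap; have := ltn_ord x.
by repeat case: ifP; lia.
Qed.

Lemma Gn_orient_swap x y : Gn_orient (Gn_swap x) (Gn_swap y) = Gn_orient x y.
Proof.
rewrite /Gn_orient !val_Gn_swap; have := ltn_ord x; have := ltn_ord y.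
by repeat case: ifP; move=> *; apply/idP/idP; lia.
Qed.

Lemma Gn_swap_u : Gn_swap Gn_u = Gn_v.
Proof.
by apply/val_inj => /=; rewrite val_Gn_swap val_Gn_u val_Gn_v; repeat case: ifP; lia.
Qed.

Lemma in_Q1_swap x : in_Q1 x -> ~~ in_Q1 (Gn_swap x).
Proof. by rewrite /in_Q1 val_Gn_swap; repeat case: ifP; lia. Qed.

Lemma Gn_u_notin_Q1 : ~~ in_Q1 Gn_u. Proof. by rewrite /in_Q1 val_Gn_u; lia. Qed.
Lemma Gn_v_notin_Q1 : ~~ in_Q1 Gn_v. Proof. by rewrite /in_Q1 val_Gn_v; lia. Qed.
Lemma Gn_u_neq_v : Gn_u != Gn_v. Proof. by rewrite -val_eqE /= val_Gn_u val_Gn_v; lia. Qed.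

Lemma Gn_orient_side x y : Gn_orient x y ->
  side_arc in_Q1 Gn_u Gn_v x y || side_arc in_Q1 Gn_u Gn_v (Gn_swap x) (Gn_swap y).
Proof.
rewrite /side_arc /in_Q1 -!val_eqE /= !val_Gn_swap val_Gn_u val_Gn_v /Gn_orient.
by have := ltn_ord x; have := ltn_ord y; repeat case: ifP; move=> *; lia.
Qed.

Lemma Gn_potential_dec x y : Gn_orient x y -> side_arc in_Q1 Gn_u Gn_v x y ->
  Gn_potential y < Gn_potential x.
Proof.
rewrite /side_arc /in_Q1 -!val_eqE /= val_Gn_u val_Gn_v /Gn_orient /Gn_potential.
by have := ltn_ord x; have := ltn_ord y; repeat case: ifP; move=> *; lia.
Qed.

Lemma Gn_orient_even_neq_odd : num_even_eulerian Gn_orient <> num_odd_eulerian Gn_orient.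
Proof.
exact: (num_even_neq_odd_eulerian Gn_swapK Gn_orient_swap Gn_swap_u in_Q1_swap
          Gn_u_notin_Q1 Gn_v_notin_Q1 Gn_u_neq_v Gn_orient_side Gn_potential_dec).
Qed.

Lemma Gn_partE (x : 'I_n) : Gn_part x = if x < m then 0 else if x < m.*2 then 1 else 2.
Proof. by rewrite /Gn_part (_ : (n - 2) %/ 2 = m) ?mul2n //; lia. Qed.

Lemma Gn_orientation : orientation (@Gn n) Gn_orient.
Proof.
split=> x y; rewrite /Gn !Gn_partE -val_eqE /=.
  rewrite /Gn_orient; have := ltn_ord x; have := ltn_ord y.
  by repeat case: ifP; move=> *; lia.
move=> gxy; have : Gn_orient x y || Gn_orient y x.
  move: gxy; rewrite /Gn_orient; have := ltn_ord x; have := ltn_ord y.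
  by repeat case: ifP; move=> *; lia.
have : ~~ (Gn_orient x y && Gn_orient y x).
  rewrite /Gn_orient; have := ltn_ord x; have := ltn_ord y.
  by repeat case: ifP; move=> *; lia.
by case: (Gn_orient x y); case: (Gn_orient y x).
Qed.

Lemma Gn_orient_outdeg x : outdeg Gn_orient x < m.+1.
Proof.
rewrite /outdeg ltnS.
pose s := if x < m then m.*2.+1 :: iota 0 x
          else if x < m.*2 then m.*2 :: iota m (x - m)
          else if x == m.*2 :> nat then iota 0 m else iota m m.
apply: leq_trans (@card_le_size_val _ _ s _) _.
  move=> y; rewrite inE /Gn_orient /s; have := ltn_ord x; have := ltn_ord y.
  by repeat case: ifP; move=> *; rewrite ?in_cons ?mem_iota; lia.
by rewrite /s; have := ltn_ord x; repeat case: ifP; move=> *; rewrite /= ?size_iota; lia.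
Qed.

Lemma Gn_uncolourable (c : 'I_n -> 'I_m) : exists x y, @Gn n x y /\ c x = c y.
Proof.
pose f (i : 'I_m.+1) : 'I_n := if i < m then inord i else Gn_u.
have val_f i : (f i : nat) = if i < m then (i : nat) else m.*2.
  by rewrite /f; case: ifP => lt_im; rewrite ?val_Gn_u // inordK //; lia.
apply: (@clique_uncolourable _ _ _ _ f) => // i j.
rewrite -val_eqE /Gn !Gn_partE -val_eqE /= !val_f.
by have := ltn_ord i; have := ltn_ord j; repeat case: ifP; move=> *; lia.
Qed.

End TwoCliquesJoinTwoVertices.

Theorem theorem2 (n : nat) :
  4 <= n -> ~~ odd n -> AT_number_is (@Gn n) (n %/ 2).
Proof.
move=> n_ge4 n_even.
have [m ->] : exists m, n = m.*2.+2 by exists n./2.-1; lia.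
rewrite (_ : m.*2.+2 %/ 2 = m.+1); last by lia.
split.
  exists (@Gn_orient m); split; first exact: Gn_orientation.
  by split; [exact: Gn_orient_outdeg | exact: Gn_orient_even_neq_odd].
by move=> k /(AT_admissible_gt (@Gn_uncolourable m)).
Qed.
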